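(* Let $C=\{a,b,c\}$ and let $W_4\subseteq C^\omega$ be the set of infinite words which either contain infinitely many occurrences of the factor $bb$, or contain only finitely many occurrences of $b$ and only finitely many occurrences of the factor $aa$. Then the minimal number of states of a deterministic parity automaton recognising $W_4$ is $3$.
   Context: A deterministic parity automaton over $C$ consists of a finite set of states $Q$, an initial state $q_0$, a transition function $Q\times C\to Q$ and a priority function assigning a natural number to each transition. The run on $w\in C^\omega$ is the unique sequence of transitions from $q_0$ reading $w$; $w$ is accepted if the maximal priority occurring infinitely often along the run is even. The automaton recognises the set of accepted words. *)

From mathcomp Require Import all_boot.
Set Implicit Arguments. Unset Strict Implicit. Unset Printing Implicit Defensive.

Record DPA (C : Type) := {
  state : finType;
  init : state;
  delta : state -> C -> state;
  prio : state -> C -> nat }.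

Definition word (C : Type) := nat -> C.

Fixpoint run_state C (A : DPA C) (w : word C) (n : nat) : state A :=
  match n with
  | 0 => init A
  | n'.+1 => delta (run_state A w n') (w n')
  end.

Definition run_prio C (A : DPA C) (w : word C) (n : nat) : nat :=
  prio (run_state A w n) (w n).

Definition inf_often (P : nat -> Prop) : Prop :=
  forall N, exists n, N <= n /\ P n.

Definition accepts C (A : DPA C) (w : word C) : Prop :=
  exists k, ~~ odd k /\ inf_often (fun n => run_prio A w n = k) /\
    (forall k', inf_often (fun n => run_prio A w n = k') -> k' <= k).

Definition recognises C (A : DPA C) (L : word C -> Prop) : Prop :=
  forall w, accepts A w <-> L w.

Inductive letter := la | lb | lc.

Definition W4 (w : word letter) : Prop :=
  inf_often (fun n => w n = lb /\ w n.+1 = lb)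
  \/ ((exists N, forall n, N <= n -> w n <> lb)
      /\ (exists N, forall n, N <= n -> ~ (w n = la /\ w n.+1 = la))).

(* Upper bound: remember the last letter read, and give reading b after b
   priority 4, any other b priority 3, a after a priority 1, and everything
   else priority 0.

   Lower bound: W4 is prefix-independent, so on a lasso v u^omega only the loop u
   matters, and in a DPA the loop u1 u2 obtained by concatenating two loops at
   a common state has the larger of their two maximal priorities; hence its
   verdict is that of u1 or of u2.  W4 contradicts this on many pairs: b and c
   are accepted but bc is rejected, bc and cb are rejected but bccb is
   accepted, and so on.  Every DPA with at most two states is the image of a
   transition structure on bool, and for each of the 64 of those an exhaustive
   search over words of length at most 3 finds such a pair of loops. *)
From HB Require Import structures.
From mathcomp Require Import all_boot.
From Stdlib Require Import Classical.

Set Implicit Arguments.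
Unset Strict Implicit.
Unset Printing Implicit Defensive.

Definition nat_of_letter (x : letter) : nat :=
  match x with la => 0 | lb => 1 | lc => 2 end.

Definition letter_of_nat (n : nat) : option letter :=
  nth None [:: Some la; Some lb; Some lc] n.

Lemma nat_of_letterK : pcancel nat_of_letter letter_of_nat.
Proof. by case. Qed.

HB.instance Definition _ := Countable.copy letter (pcan_type nat_of_letterK).

Definition letters : seq letter := [:: la; lb; lc].

Lemma letters_enumP : Finite.axiom letters.
Proof. by case. Qed.

HB.instance Definition _ := isFinite.Build letter letters_enumP.

Lemma card_letter : #|{: letter}| = 3.
Proof. by rewrite cardT enumT unlock. Qed.

Lemma modnSm m d : m.+1 %% d = (m %% d).+1 %% d.
Proof. by rewrite -addn1 -modnDml addn1. Qed.

Definition eventually (P : nat -> Prop) : Prop :=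
  exists N, forall n, N <= n -> P n.

Section InfinitelyOften.
Implicit Types P Q : nat -> Prop.

Lemma sub_inf_often P Q :
  (forall n, P n -> Q n) -> inf_often P -> inf_often Q.
Proof. by move=> PQ infP N; have [n [Nn /PQ]] := infP N; exists n. Qed.

Lemma eq_inf_often P Q :
  (forall n, P n <-> Q n) -> inf_often P <-> inf_often Q.
Proof. by move=> PQ; split; apply: sub_inf_often => n /PQ. Qed.

Lemma inf_often_shift P : inf_often (fun n => P n.+1) <-> inf_often P.
Proof.
split=> infP N.
  by have [n [Nn Pn]] := infP N; exists n.+1; split=> //; apply: leqW.
by have [[|n] [Nn Pn]] := infP N.+1; last by exists n.
Qed.

Lemma eventually_inf_often P : eventually P -> inf_often P.
Proof. by move=> [N evP] M; exists (maxn N M); split; [apply: leq_maxr | apply/evP/leq_maxl]. Qed.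

Lemma eventually_and P Q :
  eventually P -> eventually Q -> eventually (fun n => P n /\ Q n).
Proof.
move=> [M evP] [N evQ]; exists (maxn M N) => n; rewrite geq_max => /andP[Mn Nn].
by split; [apply: evP | apply: evQ].
Qed.

Lemma eventually_not P : eventually (fun n => ~ P n) <-> ~ inf_often P.
Proof.
split=> [[N evP] infP | finP].
  by have [n [/evP]] := infP N.
apply: NNPP => nevP; apply: finP => N; apply: NNPP => nP; apply: nevP.
by exists N => n Nn Pn; apply: nP; exists n.
Qed.

Lemma inf_often_or P Q :
  inf_often (fun n => P n \/ Q n) -> inf_often P \/ inf_often Q.
Proof.
move=> infPQ; apply: NNPP => /not_or_and[/eventually_not finP /eventually_not finQ].
have [N evPQ] := eventually_and finP finQ.
by have [n [/evPQ [nP nQ] []]] := infPQ N.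
Qed.

Lemma inf_often_periodic P Q n0 p : 0 < p ->
  (forall m, P (n0 + m) <-> Q (m %% p)) ->
  inf_often P <-> exists2 j, j < p & Q j.
Proof.
move=> p_gt0 PQ; split=> [infP | [j jp Qj] N].
  have [n [n0n Pn]] := infP n0; exists ((n - n0) %% p); first by rewrite ltn_mod.
  by apply/PQ; rewrite subnKC.
exists (n0 + (N * p + j)); split.
  by rewrite (leq_trans (leq_pmulr N p_gt0)) // addnCA leq_addr.
by apply/PQ; rewrite modnMDl modn_small.
Qed.

End InfinitelyOften.

Lemma accepts_intro (C : Type) (A : DPA C) (w : word C) k : ~~ odd k ->
  inf_often (fun n => run_prio A w n = k) ->
  eventually (fun n => run_prio A w n <= k) -> accepts A w.
Proof.
move=> k_even infk [N evk]; exists k; split=> //; split=> // k' infk'.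
by have [n [/evk le_k]] := infk' N => <-.
Qed.

Definition last_letter_prio (y x : letter) : nat :=
  match x with
  | la => if y == la then 1 else 0
  | lb => if y == lb then 4 else 3
  | lc => 0
  end.

Definition last_letter_dpa : DPA letter :=
  {| state := letter; init := lc; delta := fun _ x => x; prio := last_letter_prio |}.

Lemma last_letter_prio_le4 y x : last_letter_prio y x <= 4.
Proof. by case: x; case: y. Qed.

Section LastLetter.
Variable w : word letter.
Local Notation p := (run_prio last_letter_dpa w).

Lemma inf_often_prio4 :
  inf_often (fun n => p n = 4) <-> inf_often (fun n => w n = lb /\ w n.+1 = lb).
Proof.
apply: iff_trans (iff_sym (inf_often_shift _)) _; apply: eq_inf_often => n.
by rewrite /run_prio /=; case: (w n); case: (w n.+1); split=> // -[].
Qed.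

Lemma inf_often_prio1 :
  inf_often (fun n => w n = la /\ w n.+1 = la) -> inf_often (fun n => p n = 1).
Proof.
move=> inf_aa; apply/(inf_often_shift (fun n => p n = 1)).
by apply: sub_inf_often inf_aa => n [wn wn1]; rewrite /run_prio /= wn wn1.
Qed.

Lemma inf_often_prio_b :
  inf_often (fun n => w n = lb) ->
  inf_often (fun n => p n = 3) \/ inf_often (fun n => p n = 4).
Proof.
move=> inf_b; apply: inf_often_or; apply: sub_inf_often inf_b => n wn.
by rewrite /run_prio wn /=; case: (run_state _ _ n); [left | right | left].
Qed.

Lemma eventually_prio0 : eventually (fun n => w n <> lb) ->
  eventually (fun n => ~ (w n = la /\ w n.+1 = la)) -> eventually (fun n => p n = 0).
Proof.
move=> fin_b fin_aa; have [N ev] := eventually_and fin_b fin_aa.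
exists N.+1 => -[//|m] Nm; have [_ no_aa] := ev m Nm; have [no_b _] := ev m.+1 (leqW Nm).
rewrite /run_prio /=; move: no_b no_aa.
by case: (w m); case: (w m.+1) => // _ no_aa; case: no_aa.
Qed.

End LastLetter.

Lemma last_letter_dpa_recognises : recognises last_letter_dpa W4.
Proof.
move=> w; split=> [[k [k_even [infk max_k]]] | ].
  have [n [_ pn]] := infk 0.
  have [k0 | k4] : k = 0 \/ k = 4.
    move: k_even; rewrite -pn /run_prio.
    by case: (run_state _ _ n); case: (w n) => //= _; [left | left | right | left..].
  - right; rewrite k0 in max_k; split; apply/eventually_not.
      by move=> /inf_often_prio_b [] /max_k.
    by move=> /inf_often_prio1 /max_k.
  - by left; apply/inf_often_prio4; rewrite -k4.
case=> [inf_bb | [fin_b fin_aa]].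
  apply: (@accepts_intro _ _ _ 4) => //; first exact/inf_often_prio4.
  by exists 0 => n _; apply: last_letter_prio_le4.
have [N ev0] := eventually_prio0 fin_b fin_aa.
apply: (@accepts_intro _ _ _ 0) => //; first by apply: eventually_inf_often; exists N.
by exists N => n /ev0 ->.
Qed.

Lemma bigmax_mem_seq (s : seq nat) : s != [::] -> \max_(k <- s) k \in s.
Proof.
elim: s => [|k s IHs] // _; rewrite big_cons inE.
case: (eqVneq s [::]) => [-> | /IHs max_s]; first by rewrite big_nil maxn0 eqxx.
by case: leqP; rewrite ?max_s ?orbT ?eqxx.
Qed.

Section Lasso.
Variables (C : Type) (x0 : C) (A : DPA C).
Local Notation run := (foldl (@delta C A)).

Lemma run_state_prefix (w : word C) (v : seq C) :
  (forall i, i < size v -> w i = nth x0 v i) -> run_state A w (size v) = run (init A) v.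
Proof.
elim/last_ind: v => [//|v x IHv] wv.
rewrite size_rcons foldl_rcons /= IHv => [|i lt_iv]; last first.
  by rewrite wv ?nth_rcons ?lt_iv // size_rcons ltnS ltnW.
by rewrite wv ?nth_rcons ?ltnn ?eqxx // size_rcons.
Qed.

Definition lasso (v u : seq C) : word C := fun n =>
  if n < size v then nth x0 v n else nth x0 u ((n - size v) %% size u).

Lemma lasso_cycle v u m : lasso v u (size v + m) = nth x0 u (m %% size u).
Proof. by rewrite /lasso ltnNge leq_addr /= addKn. Qed.

Fixpoint loop_prios (q : state A) (u : seq C) : seq nat :=
  if u is x :: u' then prio q x :: loop_prios (delta q x) u' else [::].

Lemma size_loop_prios q u : size (loop_prios q u) = size u.
Proof. by elim: u q => [|x u IHu] q //=; rewrite IHu. Qed.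

Lemma nth_loop_prios q u j : j < size u ->
  nth 0 (loop_prios q u) j = prio (run q (take j u)) (nth x0 u j).
Proof. by elim: u q j => [|x u IHu] q [|j] //= /IHu. Qed.

Lemma loop_prios_cat q u1 u2 :
  loop_prios q (u1 ++ u2) = loop_prios q u1 ++ loop_prios (run q u1) u2.
Proof. by elim: u1 q => [|x u1 IHu] q //=; rewrite IHu. Qed.

Definition loop_max q u := \max_(k <- loop_prios q u) k.

Lemma loop_max_cat q u1 u2 : run q u1 = q ->
  loop_max q (u1 ++ u2) = maxn (loop_max q u1) (loop_max q u2).
Proof. by move=> loop1; rewrite /loop_max loop_prios_cat loop1 big_cat. Qed.

Section Loop.
Variables (v u : seq C) (q : state A).
Hypotheses (u_gt0 : 0 < size u) (run_v : run (init A) v = q) (loop_u : run q u = q).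

Lemma run_state_lasso m :
  run_state A (lasso v u) (size v + m) = run q (take (m %% size u) u).
Proof.
elim: m => [|m IHm].
  by rewrite addn0 mod0n take0 run_state_prefix // => i lt_iv; rewrite /lasso lt_iv.
have lt_mu : m %% size u < size u by rewrite ltn_mod.
rewrite addnS /= IHm lasso_cycle -foldl_rcons -take_nth //.
rewrite modnSm; case: (ltnP (m %% size u).+1 (size u)) => [|le_um].
  by move/modn_small ->.
have -> : (m %% size u).+1 = size u by apply/eqP; rewrite eqn_leq lt_mu.
by rewrite modnn take0 take_size loop_u.
Qed.

Lemma run_prio_lasso m :
  run_prio A (lasso v u) (size v + m) = nth 0 (loop_prios q u) (m %% size u).
Proof. by rewrite /run_prio run_state_lasso lasso_cycle nth_loop_prios ?ltn_mod. Qed.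

Lemma inf_often_run_prio_lasso k :
  inf_often (fun n => run_prio A (lasso v u) n = k) <-> k \in loop_prios q u.
Proof.
rewrite (inf_often_periodic (n0 := size v) (Q := fun j => nth 0 (loop_prios q u) j = k) u_gt0);
  last by move=> m /=; rewrite run_prio_lasso.
split=> [[j ju <-] | /(nthP 0) [j ju <-]]; first by rewrite mem_nth ?size_loop_prios.
by exists j; rewrite -?(size_loop_prios q).
Qed.

Lemma accepts_lasso : accepts A (lasso v u) <-> ~~ odd (loop_max q u).
Proof.
have lp_max : loop_max q u \in loop_prios q u.
  by apply: bigmax_mem_seq; rewrite -size_eq0 size_loop_prios -lt0n.
split=> [[k [k_even [infk max_k]]] | max_even].
  have lp_k := iffLR (inf_often_run_prio_lasso k) infk.
  suff -> : loop_max q u = k by [].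
  apply/eqP; rewrite eqn_leq max_k /=; first exact: leq_bigmax_seq.
  exact: (iffRL (inf_often_run_prio_lasso _) lp_max).
apply: (accepts_intro max_even); first exact: (iffRL (inf_often_run_prio_lasso _) lp_max).
exists (size v) => n /subnKC <-; rewrite run_prio_lasso.
by apply: leq_bigmax_seq; rewrite // mem_nth ?size_loop_prios ?ltn_mod.
Qed.

End Loop.

Lemma accepts_lasso_cat v u1 u2 q : 0 < size u1 -> 0 < size u2 ->
  run (init A) v = q -> run q u1 = q -> run q u2 = q ->
  (accepts A (lasso v (u1 ++ u2)) <-> accepts A (lasso v u1)) \/
  (accepts A (lasso v (u1 ++ u2)) <-> accepts A (lasso v u2)).
Proof.
move=> u1_gt0 u2_gt0 run_v loop1 loop2.
have u12_gt0 : 0 < size (u1 ++ u2) by rewrite size_cat ltn_addr.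
have loop12 : run q (u1 ++ u2) = q by rewrite foldl_cat loop1.
rewrite !(accepts_lasso _ run_v) // loop_max_cat //.
by case: leqP => _; [right | left].
Qed.

End Lasso.

Definition cyclic_pair (x : letter) (u : seq letter) : bool :=
  has (fun j => (nth la u j == x) && (nth la u (j.+1 %% size u) == x)) (iota 0 (size u)).

Definition W4_cycle (u : seq letter) : bool :=
  cyclic_pair lb u || (lb \notin u) && ~~ cyclic_pair la u.

Lemma cyclic_pairP x u :
  reflect (exists2 j, j < size u & nth la u j = x /\ nth la u (j.+1 %% size u) = x)
          (cyclic_pair x u).
Proof.
apply: (iffP hasP) => [[j] | [j ju [ujx ujx']]].
  by rewrite mem_iota => /andP[_ ju] /andP[/eqP ? /eqP ?]; exists j.
by exists j; rewrite ?mem_iota ?ujx ?ujx' ?eqxx.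
Qed.

Section W4Lasso.
Variables (v u : seq letter).
Hypothesis u_gt0 : 0 < size u.
Local Notation w := (lasso la v u).

Lemma inf_often_letter_lasso x : inf_often (fun n => w n = x) <-> x \in u.
Proof.
rewrite (inf_often_periodic (n0 := size v) (Q := fun j => nth la u j = x) u_gt0);
  last by move=> m /=; rewrite lasso_cycle.
split=> [[j ju <-] | /(nthP la) [j ju <-]]; first exact: mem_nth.
by exists j.
Qed.

Lemma inf_often_pair_lasso x :
  inf_often (fun n => w n = x /\ w n.+1 = x) <-> cyclic_pair x u.
Proof.
rewrite (inf_often_periodic (n0 := size v) u_gt0
  (Q := fun j => nth la u j = x /\ nth la u (j.+1 %% size u) = x)).
  by split=> /cyclic_pairP.
by move=> m /=; rewrite -addnS !lasso_cycle modnSm.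
Qed.

Lemma W4_lasso : W4 w <-> W4_cycle u.
Proof.
have pairP x := inf_often_pair_lasso x.
have letterP x := inf_often_letter_lasso x.
rewrite /W4_cycle; split.
  case=> [/pairP -> // | [/eventually_not fin_b /eventually_not fin_aa]].
  apply/orP; right; apply/andP; split; apply/negP; first by move/letterP.
  by move/pairP.
case/orP => [/pairP | /andP [/negP b_notin /negP no_aa]]; first by left.
right; split; apply/eventually_not; first by move/letterP.
by move/pairP.
Qed.

End W4Lasso.

Lemma W4_cycle_cat (A : DPA letter) v u1 u2 q : recognises A W4 ->
  0 < size u1 -> 0 < size u2 -> foldl (@delta _ A) (init A) v = q ->
  foldl (@delta _ A) q u1 = q -> foldl (@delta _ A) q u2 = q ->
  W4_cycle (u1 ++ u2) = W4_cycle u1 \/ W4_cycle (u1 ++ u2) = W4_cycle u2.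
Proof.
move=> recA u1_gt0 u2_gt0 run_v loop1 loop2.
have verdict u : 0 < size u -> accepts A (lasso la v u) <-> W4_cycle u.
  by move=> u_gt0; apply: iff_trans (recA _) (W4_lasso _ u_gt0).
have u12_gt0 : 0 < size (u1 ++ u2) by rewrite size_cat ltn_addr.
have [[v1 v2] v12] := (verdict _ u1_gt0, verdict _ u2_gt0, verdict _ u12_gt0).
have [E | E] := accepts_lasso_cat la u1_gt0 u2_gt0 run_v loop1 loop2; [left | right].
  by apply/idP/idP => [/v12/E/v1 | /v1/E/v12].
by apply/idP/idP => [/v12/E/v2 | /v2/E/v12].
Qed.

Lemma card_le2_cover (T : finType) (p : T) :
  #|T| <= 2 -> exists t, forall s, s = p \/ s = t.
Proof.
move=> le_T2; case: (pickP (fun s => s != p)) => [t tp | all_p]; last first.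
  by exists p => s; left; apply/eqP/negPn; rewrite all_p.
exists t => s; case: (eqVneq s p) => [| sp]; [by left | right].
apply/eqP; apply/negPn/negP => st; have /card_uniqP card3 : uniq [:: p; t; s].
  by rewrite /= !inE !negb_or eq_sym tp eq_sym sp eq_sym st.
by have := leq_trans (max_card (mem [:: p; t; s])) le_T2; rewrite card3.
Qed.

Section TwoStates.
Variables (C : Type) (A : DPA C).

Lemma two_state_quotient : #|state A| <= 2 ->
  exists (g : bool -> state A) (d : bool -> C -> bool),
    g false = init A /\ forall x l, delta (g x) l = g (d x l).
Proof.
move=> le_A2; have [t cover] := card_le2_cover (init A) le_A2.
pose g x := if x then t else init A.
exists g, (fun x l => delta (g x) l != init A); split=> // x l.
case: eqVneq => [-> // | not_init].
by case: (cover (delta (g x) l)) => // E; rewrite E eqxx in not_init.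
Qed.

Lemma foldl_quotient (g : bool -> state A) (d : bool -> C -> bool) :
  (forall x l, delta (g x) l = g (d x l)) ->
  forall x s, foldl (@delta _ A) (g x) s = g (foldl d x s).
Proof. by move=> gd x s; elim: s x => [|l s IHs] x //=; rewrite gd IHs. Qed.

End TwoStates.

Fixpoint words (n : nat) : seq (seq letter) :=
  if n is n'.+1 then [seq x :: u | x <- letters, u <- words n'] else [:: [::]].

Definition short_words : seq (seq letter) := flatten [seq words n | n <- iota 1 3].

Definition flipping_loops (d : bool -> letter -> bool) (v u1 u2 : seq letter) : bool :=
  let q := foldl d false v in
  [&& 0 < size u1, 0 < size u2, foldl d q u1 == q, foldl d q u2 == q,
      W4_cycle u1 == W4_cycle u2 & W4_cycle (u1 ++ u2) != W4_cycle u1].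

(* In a two-state structure every reachable state is reached by a word of
   length at most 1. *)
Definition has_flipping_loops (d : bool -> letter -> bool) : bool :=
  has (fun v => has (fun u1 => has (flipping_loops d v u1) short_words) short_words)
      ([::] :: [seq [:: x] | x <- letters]).

Definition trans2 (fa fb fc ta tb tc : bool) (x : bool) (l : letter) : bool :=
  match l with
  | la => if x then ta else fa
  | lb => if x then tb else fb
  | lc => if x then tc else fc
  end.

Lemma two_state_flipping_loops fa fb fc ta tb tc :
  has_flipping_loops (trans2 fa fb fc ta tb tc).
Proof. by case: fa; case: fb; case: fc; case: ta; case: tb; case: tc; vm_compute. Qed.

Lemma recognises_W4_no_flipping_loops (A : DPA letter) (g : bool -> state A) d :
  recognises A W4 -> g false = init A -> (forall x l, delta (g x) l = g (d x l)) ->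
  ~~ has_flipping_loops d.
Proof.
move=> recA g0 gd; apply/hasPn => v _; apply/hasPn => u1 _; apply/hasPn => u2 _.
apply/negP => /andP [u1_gt0 /and5P [u2_gt0 /eqP loop1 /eqP loop2 /eqP same_verdict flip]].
pose q := foldl d false v.
have run_g x u : foldl (@delta _ A) (g x) u = g (foldl d x u) := foldl_quotient gd x u.
have run_v : foldl (@delta _ A) (init A) v = g q by rewrite -g0 run_g.
have loop_g u : foldl d q u = q -> foldl (@delta _ A) (g q) u = g q by rewrite run_g => ->.
case: (W4_cycle_cat recA u1_gt0 u2_gt0 run_v (loop_g _ loop1) (loop_g _ loop2)) => /eqP;
  by rewrite -?same_verdict (negbTE flip).
Qed.

Lemma W4_dpa_card_ge3 (A : DPA letter) : recognises A W4 -> 3 <= #|state A|.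
Proof.
move=> recA; rewrite leqNgt ltnS; apply/negP => /two_state_quotient [g [d [g0 gd]]].
pose d2 := trans2 (d false la) (d false lb) (d false lc) (d true la) (d true lb) (d true lc).
have gd2 x l : delta (g x) l = g (d2 x l) by rewrite gd; case: x; case: l.
by have := recognises_W4_no_flipping_loops recA g0 gd2; rewrite two_state_flipping_loops.
Qed.

Theorem propositionB2 :
  (exists A : DPA letter, recognises A W4 /\ #|state A| = 3) /\
  (forall A : DPA letter, recognises A W4 -> 3 <= #|state A|).
Proof.
split; last exact: W4_dpa_card_ge3.
by exists last_letter_dpa; split; [exact: last_letter_dpa_recognises | exact: card_letter].
Qed.
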